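(* Let $\mathcal C\subseteq2^{[n]}$ be a code. If the polar complex $\Gamma(\mathcal C)$ is shellable, then either $\mathcal C=2^{[n]}$ or $\Gamma(\mathcal C)$ is collapsible.
   Context: The polar complex $\Gamma(\mathcal C)$ is the simplicial complex on $[n]\sqcup\{\bar1,\dots,\bar n\}$ consisting of all subsets of the sets $\sigma\sqcup\{\bar i:i\in[n]\setminus\sigma\}$, $\sigma\in\mathcal C$; it is pure of dimension $n-1$. A pure $k$-dimensional complex is shellable if its facets admit an ordering $F_1,\dots,F_t$ such that for each $i>1$, the complex of all subsets of $F_i$ intersected with the complex of all subsets of $F_1,\dots,F_{i-1}$ is pure of dimension $k-1$. A free pair in a complex $\Delta$ is $(\sigma,\tau)$ with $\tau$ a facet, $\sigma\subsetneq\tau$, and $\sigma$ contained in no other facet; collapsing along $\sigma$ replaces $\Delta$ by $\{\nu\in\Delta:\nu\not\supseteq\sigma\}$; $\Delta$ is collapsible if a finite sequence of collapses yields the void complex $\{\}$ (with no faces), so $\{\}$ is collapsible and $\{\emptyset\}$ is not. *)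

From mathcomp Require Import all_boot.
Set Implicit Arguments. Unset Strict Implicit. Unset Printing Implicit Defensive.

(* A simplicial complex on a finite vertex type V is a family of faces
   {set {set V}} (assumed downward closed where relevant). *)

Section Complexes.
Variable V : finType.

Definition is_facet (D : {set {set V}}) (F : {set V}) : bool :=
  (F \in D) && [forall (G : {set V} | G \in D), (F \subset G) ==> (G == F)].

Definition down (A : {set {set V}}) : {set {set V}} :=
  [set G : {set V} | [exists F in A, G \subset F]].

Definition pure_card (d : nat) (D : {set {set V}}) : Prop :=
  forall F, is_facet D F -> #|F| = d.

(* shellable: pure of dimension k (facets of size k+1 =: d) and the facets
   admit an ordering F_1..F_t such that for i>1, <F_i> ∩ <F_1..F_{i-1}>
   is pure of dimension k-1 (facets of size d-1). *)
Definition shellable (D : {set {set V}}) : Prop :=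
  exists d : nat, pure_card d D /\
  exists s : seq {set V},
    [/\ uniq s, (forall F, F \in s = is_facet D F) &
       forall i, 0 < i < size s ->
         pure_card d.-1
           (down [set nth set0 s i] :&: down [set F in take i s])].

Definition free_pair (D : {set {set V}}) (sigma tau : {set V}) : Prop :=
  [/\ is_facet D tau, sigma \proper tau &
      forall F, is_facet D F -> sigma \subset F -> F = tau].

Definition collapse (D : {set {set V}}) (sigma : {set V}) : {set {set V}} :=
  [set nu in D | ~~ (sigma \subset nu)].

Inductive collapsible : {set {set V}} -> Prop :=
| collapsible_void : collapsible set0
| collapsible_step D sigma tau :
    free_pair D sigma tau -> collapsible (collapse D sigma) -> collapsible D.

End Complexes.

(* Polar complex: vertices [n] ⊔ {1bar..nbar} modeled as 'I_n + 'I_n,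
   inl i = i, inr i = ibar. *)
Definition polar_facet (n : nat) (sigma : {set 'I_n}) : {set 'I_n + 'I_n} :=
  (inl @: sigma) :|: (inr @: ~: sigma).

Definition polar (n : nat) (C : {set {set 'I_n}}) : {set {set 'I_n + 'I_n}} :=
  down ((@polar_facet n) @: C).

(* A shelling F_0, ..., F_(t-1) splits the complex into the intervals
   [R_k, F_k] between restriction faces and facets.  If no R_k equals its
   facet, the free pairs (R_k, F_k) collapse the complex away, last facet
   first.  If R_i = F_i, the alternating count of faces of <F_0, ..., F_i>
   above any face L of F_i is nonzero.  In a polar complex take F_i = PF u
   and L = PF u :&: PF x for a code x missing from F_0, ..., F_i and closest
   to u: the faces above L form a cross-polytope boundary minus one facet,
   whose alternating count is 0.  So no code is missing and C = 2^[n]. *)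

From mathcomp Require Import all_boot ssralg ssrnum ssrint.
Set Implicit Arguments. Unset Strict Implicit. Unset Printing Implicit Defensive.
Import GRing.Theory Num.Theory.

Section SignSum.
Variables (R : pzRingType) (V : finType).
Local Open Scope ring_scope.

(* The toggle G |-> G (+) {w}, for w in Y but not in X, pairs off the
   terms of opposite signs. *)
Lemma sum_sign_interval (X Y : {set V}) :
  \sum_(G : {set V} | (X \subset G) && (G \subset Y)) (-1) ^+ #|G|
    = (if X == Y then (-1) ^+ #|Y| else 0 : R).
Proof.
have [<- | neqXY] := eqVneq X Y.
  by rewrite (big_pred1 X) // => G; rewrite /= eqEsubset andbC.
have [sXY | nsXY] := boolP (X \subset Y); last first.
  by rewrite big_pred0 // => G; apply: contraNF nsXY => /andP[/subset_trans]; apply.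
have /subsetPn[w wY wX] : ~~ (Y \subset X).
  by apply: contra_neqN neqXY => sYX; apply/eqP; rewrite eqEsubset sXY.
pose toggle (G : {set V}) := [set z | (z \in G) (+) (z == w)].
have toggleK : involutive toggle.
  by move=> G; apply/setP => z; rewrite !inE -addbA addbb addbF.
have mem_toggle z G : z != w -> (z \in toggle G) = (z \in G).
  by move=> zw; rewrite inE (negbTE zw) addbF.
have toggle_range G : (X \subset toggle G) && (toggle G \subset Y)
                    = (X \subset G) && (G \subset Y).
  congr andb; apply/subsetP/subsetP => sub z.
  - by move=> zX; rewrite -mem_toggle ?sub //; apply: contraNneq wX => <-.
  - by move=> zX; rewrite mem_toggle ?sub //; apply: contraNneq wX => <-.
  - by have [-> // | zw] := eqVneq z w; rewrite -(mem_toggle _ G zw) => /sub.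
  - by have [-> // | zw] := eqVneq z w; rewrite mem_toggle // => /sub.
have sign_toggle (G : {set V}) : w \in G -> (-1) ^+ #|toggle G| = - (-1) ^+ #|G| :> R.
  move=> wG; have -> : toggle G = G :\ w.
    by apply/setP => z; rewrite !inE; have [-> | zw] := eqVneq z w; rewrite ?wG ?addbF ?addbT.
  by rewrite [in RHS](cardsD1 w G) wG add1n exprS mulN1r opprK.
rewrite (bigID (fun G : {set V} => w \in G)) /=.
rewrite [S in _ + S](reindex_inj (inv_inj toggleK)) /=.
rewrite [S in _ + S](eq_big (fun G : {set V} => ((X \subset G) && (G \subset Y)) && (w \in G))
                            (fun G : {set V} => - (-1) ^+ #|G|)).
- by rewrite sumrN addrN.
- by move=> G; rewrite toggle_range inE eqxx addbT negbK.
- by move=> G /andP[_]; rewrite inE eqxx addbT negbK => /sign_toggle.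
Qed.

End SignSum.

Section Complexes.
Variable V : finType.
Implicit Types (A K : {set {set V}}) (F G H M : {set V}).

Lemma downP A G : reflect (exists2 F, F \in A & G \subset F) (G \in down A).
Proof.
by rewrite inE; apply: (iffP existsP) => [[F /andP[]] | [F]]; exists F => //; apply/andP.
Qed.

Lemma down_sub A G H : G \in down A -> H \subset G -> H \in down A.
Proof. by move=> /downP[F FA GF] HG; apply/downP; exists F; rewrite ?(subset_trans HG). Qed.

Lemma facet_maximal K F G : is_facet K F -> G \in K -> F \subset G -> G = F.
Proof. by case/andP=> _ /forallP maxF GK FG; apply/eqP; move: (maxF G); rewrite GK FG. Qed.

Lemma exists_facet_sup K G : G \in K -> exists2 M, is_facet K M & G \subset M.
Proof.
move=> GK; pose supG M := (M \in K) && (G \subset M).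
have supGG : supG G by rewrite /supG GK subxx.
case: (arg_maxnP (fun M => #|M|) supGG) => M /andP[MK GM] maxM; exists M => //.
rewrite /is_facet MK; apply/forallP => N; apply/implyP => NK; apply/implyP => MN.
by rewrite eq_sym eqEcard MN; apply: maxM; rewrite /supG NK (subset_trans GM MN).
Qed.

Lemma facet_down A F : {in A &, forall F G, F \subset G -> F = G} ->
  is_facet (down A) F = (F \in A).
Proof.
move=> antiA; apply/idP/idP => [Ffacet | FA].
  have /downP[G GA FG] : F \in down A by case/andP: Ffacet.
  by rewrite -(facet_maximal Ffacet _ FG) //; apply/downP; exists G.
have FdA : F \in down A by apply/downP; exists F.
rewrite /is_facet FdA; apply/forallP => G; apply/implyP => /downP[H HA GH].
by apply/implyP => FG; rewrite eqEsubset FG (antiA _ _ FA HA (subset_trans FG GH)) GH.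
Qed.

End Complexes.

Section Shelling.
Variables (V : finType) (D : {set {set V}}) (d : nat) (s : seq {set V}).
Hypotheses (D_pure : pure_card d D) (s_uniq : uniq s)
  (mem_s : forall F, (F \in s) = is_facet D F)
  (s_shelling : forall i, 0 < i < size s ->
     pure_card d.-1 (down [set nth set0 s i] :&: down [set F in take i s])).
Implicit Types (F G L : {set V}) (k : nat).

Definition shell_facet k := nth set0 s k.
Definition shell_prefix k := down [set F in take k s].
Definition restriction k :=
  [set w in shell_facet k | shell_facet k :\ w \in shell_prefix k].

Lemma shell_antichain : {in s &, forall F G, F \subset G -> F = G}.
Proof.
move=> F G; rewrite !mem_s => Ffacet /andP[GD _] FG.
by rewrite (facet_maximal Ffacet GD FG).
Qed.

Lemma shell_facet_in k : k < size s -> shell_facet k \in s.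
Proof. exact: mem_nth. Qed.

Lemma card_shell_facet k : k < size s -> #|shell_facet k| = d.
Proof. by move=> ks; apply: D_pure; rewrite -mem_s shell_facet_in. Qed.

Lemma shell_prefix0 : shell_prefix 0 = set0.
Proof. by apply/setP => G; rewrite in_set0; apply/negbTE/downP => -[F]; rewrite take0 inE. Qed.

Lemma mem_shell_prefixS k G : k < size s ->
  (G \in shell_prefix k.+1) = (G \in shell_prefix k) || (G \subset shell_facet k).
Proof.
move=> ks; rewrite /shell_prefix (take_nth set0 ks).
apply/downP/orP => [[F] | [/downP[F] | GF]].
- rewrite inE mem_rcons inE => /orP[/eqP -> | Fk] GF; first by right.
  by left; apply/downP; exists F; rewrite ?inE.
- by rewrite inE => Fk GF; exists F; rewrite // inE mem_rcons inE Fk orbT.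
- by exists (shell_facet k); rewrite // inE mem_rcons mem_head.
Qed.

Lemma shell_facet_notin_prefix k : k < size s -> shell_facet k \notin shell_prefix k.
Proof.
move=> ks; apply/downP => -[F]; rewrite inE => Fk kF.
have := s_uniq; rewrite -(cat_take_drop k s) (drop_nth set0 ks) cat_uniq.
case/and3P => _ /hasPn/(_ _ (mem_head _ _)) + _.
by rewrite -/(shell_facet k) (shell_antichain (shell_facet_in ks) (mem_take Fk) kF) /= Fk.
Qed.

(* The only use of the shelling condition. *)
Lemma shelling_codim1 k G : k < size s -> G \in shell_prefix k ->
  G \subset shell_facet k -> exists2 w, w \in restriction k & w \notin G.
Proof.
move=> ks Gk GF; have k_gt0 : 0 < k by case: k ks Gk GF => //; rewrite shell_prefix0 inE.
have GI : G \in down [set shell_facet k] :&: shell_prefix k.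
  by rewrite inE Gk andbT; apply/downP; exists (shell_facet k); rewrite ?inE.
have [M Mfacet GM] := exists_facet_sup GI.
have cardM : #|M| = d.-1 by apply: s_shelling Mfacet; rewrite k_gt0.
have /andP[] := Mfacet; rewrite inE => /andP[/downP[_ /set1P -> MF] Mk] _.
have /subsetPn[w wF wM] : ~~ (shell_facet k \subset M).
  apply: contra (shell_facet_notin_prefix ks) => FM.
  by have -> : shell_facet k = M by apply/eqP; rewrite eqEsubset MF FM.
have eqM : M = shell_facet k :\ w.
  apply/eqP; rewrite eqEcard subsetD1 MF wM cardM.
  by have := cardsD1 w (shell_facet k); rewrite wF card_shell_facet // => /= ->.
exists w; first by rewrite inE wF -eqM.
by apply: contra wM; apply: (subsetP GM).
Qed.

Lemma mem_shell_prefix_facet k G : k < size s -> G \subset shell_facet k ->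
  (G \in shell_prefix k) = ~~ (restriction k \subset G).
Proof.
move=> ks GF; apply/idP/subsetPn => [Gk | [w]]; first exact: shelling_codim1.
rewrite inE => /andP[wF Fwk] wG; apply: down_sub Fwk _.
by rewrite subsetD1 GF.
Qed.

Lemma restriction_sub k : restriction k \subset shell_facet k.
Proof. by apply/subsetP => w; rewrite inE => /andP[]. Qed.

Lemma restriction_notin_prefix k : k < size s -> restriction k \notin shell_prefix k.
Proof. by move=> ks; rewrite mem_shell_prefix_facet ?restriction_sub ?subxx. Qed.

Lemma free_pair_restriction k : k < size s -> restriction k != shell_facet k ->
  free_pair (shell_prefix k.+1) (restriction k) (shell_facet k).
Proof.
move=> ks RF; have Fk1 : shell_facet k \in shell_prefix k.+1.
  by rewrite mem_shell_prefixS // subxx orbT.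
have not_restriction_sub G : G \in shell_prefix k -> ~~ (restriction k \subset G).
  by move=> Gk; apply: contra (restriction_notin_prefix ks); apply: down_sub.
split; [| by rewrite properEneq RF restriction_sub |].
  rewrite /is_facet Fk1; apply/forallP => G; apply/implyP.
  rewrite mem_shell_prefixS // => /orP[Gk | GF]; apply/implyP => FG.
    by have := shell_facet_notin_prefix ks; rewrite (down_sub Gk FG).
  by rewrite eqEsubset GF FG.
move=> G /[dup] Gfacet /andP[]; rewrite mem_shell_prefixS //.
case/orP => [/not_restriction_sub/negP // | GF] _ RG.
by rewrite (facet_maximal Gfacet Fk1 GF).
Qed.

Lemma collapse_restriction k : k < size s ->
  collapse (shell_prefix k.+1) (restriction k) = shell_prefix k.
Proof.
move=> ks; apply/setP => G; rewrite inE mem_shell_prefixS //.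
have [Gk | nGk] /= := boolP (G \in shell_prefix k).
  by apply: contra (restriction_notin_prefix ks); apply: down_sub.
by apply/andP => -[GF]; rewrite -mem_shell_prefix_facet // (negbTE nGk).
Qed.

Lemma collapsible_shell_prefix :
  (forall k, k < size s -> restriction k != shell_facet k) ->
  forall k, k <= size s -> collapsible (shell_prefix k).
Proof.
move=> RF; elim=> [_ | k IHk ks]; first by rewrite shell_prefix0; constructor.
apply: (collapsible_step (free_pair_restriction ks (RF k ks))).
by rewrite collapse_restriction //; apply: IHk; rewrite ltnW.
Qed.

Section Sums.
Local Open Scope ring_scope.

Lemma sum_shell_prefix (M : nmodType) (f : {set V} -> M) m L : (m <= size s)%N ->
  \sum_(G : {set V} | (G \in shell_prefix m) && (L \subset G)) f G
  = \sum_(k < m)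
      \sum_(G : {set V} | (restriction k :|: L \subset G) && (G \subset shell_facet k)) f G.
Proof.
elim: m => [_ | m IHm ms].
  by rewrite big_ord0 big_pred0 // => G; rewrite shell_prefix0 inE.
rewrite big_ord_recr /= -IHm ?(ltnW ms) // (bigID (fun G : {set V} => G \in shell_prefix m)) /=.
congr (_ + _); apply: eq_bigl => G; rewrite mem_shell_prefixS //.
  by case: (G \in shell_prefix m); rewrite ?andbT ?andbF.
rewrite subUset; have [GF | _] := boolP (G \subset shell_facet m).
  rewrite mem_shell_prefix_facet // orbT negbK.
  by case: (restriction m \subset G); case: (L \subset G).
by rewrite orbF andbF; case: (G \in shell_prefix m); rewrite ?andbF.
Qed.

(* All terms have the sign (-1)^d and the one of the homology facet i is
   nonzero. *)
Lemma sum_sign_shell_prefix_neq0 i L : (i < size s)%N ->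
  restriction i = shell_facet i -> L \subset shell_facet i ->
  \sum_(G : {set V} | (G \in shell_prefix i.+1) && (L \subset G)) (-1) ^+ #|G| != 0 :> int.
Proof.
move=> i_lt RF LF; rewrite sum_shell_prefix //.
rewrite (eq_bigr (fun k : 'I_i.+1 =>
  (-1) ^+ d *+ (restriction k :|: L == shell_facet k))); last first.
  move=> k _; rewrite sum_sign_interval card_shell_facet ?(leq_trans (ltn_ord k)) //.
  by case: eqP.
rewrite sumrMnr mulrn_eq0 signr_eq0 orbF (bigD1 ord_max) //= RF.
by rewrite (setUidPl LF) eqxx.
Qed.

End Sums.

End Shelling.

Section Polar.
Variable n : nat.
Local Notation V := ('I_n + 'I_n)%type.
Local Notation PF := (@polar_facet n).
Implicit Types (t u x : {set 'I_n}) (P : {set {set 'I_n}}) (G : {set V}).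

Lemma mem_polar_facet (w : V) t :
  (w \in PF t) = match w with inl e => e \in t | inr e => e \notin t end.
Proof.
case: w => e; rewrite inE.
  have /negbTE-> : inl e \notin [set inr y | y in ~: t] by apply/imsetP => -[].
  by rewrite orbF (mem_imset _ _ (@inl_inj _ _)).
have /negbTE-> : inr e \notin [set inl y | y in t] by apply/imsetP => -[].
by rewrite (mem_imset _ _ (@inr_inj _ _)) inE.
Qed.

Lemma polar_facet_sub_eq t u : PF t \subset PF u -> t = u.
Proof.
move/subsetP => tu; apply/setP => e; apply/idP/idP => [et | eu].
  by have := tu (inl e); rewrite !mem_polar_facet; apply.
by apply: contraTT eu => et; have := tu (inr e); rewrite !mem_polar_facet; apply.
Qed.

Lemma polar_facet_inj : injective PF.
Proof. by move=> t u tu; apply: polar_facet_sub_eq; rewrite tu. Qed.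

Lemma polar_facetI_inj u : injective (fun t => PF u :&: PF t).
Proof.
move=> t x /setP tx; apply/setP => e.
have := tx (inl e); have := tx (inr e); rewrite !in_setI !mem_polar_facet.
by case: (e \in u); case: (e \in t); case: (e \in x).
Qed.

Lemma facet_polar P F : is_facet (polar P) F = (F \in PF @: P).
Proof.
apply: facet_down => _ _ /imsetP[t _ ->] /imsetP[u _ ->].
by move/polar_facet_sub_eq ->.
Qed.

(* The face G read as a partial assignment of the coordinates, completed
   by u. *)
Definition fill_code u G : {set 'I_n} :=
  [set e | (inl e \in G) || (e \in u) && (inr e \notin G)].

Lemma sub_polar_facet_fill u r G : G \subset PF r -> G \subset PF (fill_code u G).
Proof.
move/subsetP => Gr; apply/subsetP => -[] e eG; rewrite mem_polar_facet inE eG //=.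
rewrite andbF orbF; apply/negP => /Gr; rewrite mem_polar_facet.
by have := Gr _ eG; rewrite mem_polar_facet => /negbTE ->.
Qed.

Lemma polar_facet_fill_diff u G : PF (fill_code u G) :\: PF u \subset G.
Proof.
apply/subsetP => -[] e; rewrite inE !mem_polar_facet inE.
  by case: (e \in u) => //=; rewrite orbF.
by rewrite negbK; case: (e \in u) => //=; case: (inr e \in G); rewrite ?orbT.
Qed.

Lemma fill_code_eq u t G : PF t :\: PF u \subset G -> G \subset PF t -> fill_code u G = t.
Proof.
move=> /subsetP diffG /subsetP Gt; apply/setP => e; rewrite inE.
have inlG : inl e \in G -> e \in t by move/Gt; rewrite mem_polar_facet.
have inrG : inr e \in G -> e \notin t by move/Gt; rewrite mem_polar_facet.
have [et | net] := boolP (e \in t).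
  have [eu | neu] := boolP (e \in u); last by rewrite diffG // inE !mem_polar_facet neu et.
  by rewrite orbC (contraL inrG et).
rewrite (contraNF inlG net) /=; apply/negbTE/nandP.
have [eu | neu] := boolP (e \in u); last by left.
by right; rewrite negbK diffG // inE !mem_polar_facet eu net.
Qed.

Section Sums.
Local Open Scope ring_scope.

(* The link of PF u :&: PF x in polar P is a cross-polytope boundary minus
   the facet of x, a ball: fill_code u splits its faces into intervals
   [X t, PF t], none of them a single face. *)
Lemma sum_sign_polar_link (R : pzRingType) P u x : x \notin P ->
  (forall t, t != x -> PF u :&: PF x \subset PF t -> t \in P) ->
  \sum_(G : {set V} | (G \in polar P) && (PF u :&: PF x \subset G)) (-1) ^+ #|G| = 0 :> R.
Proof.
move=> xP near_x; set L := PF u :&: PF x.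
pose X t := L :|: (PF t :\: PF u).
have X_x : X x = PF x by rewrite /X /L setIC setID.
have fibre t G : ((G \in polar P) && (L \subset G)) && (fill_code u G == t)
    = ((L \subset PF t) && (t != x)) && ((X t \subset G) && (G \subset PF t)).
  apply/idP/idP => [/andP[/andP[/downP[_ /imsetP[r rP ->] Gr] LG] /eqP <-] | ].
    have Gt := sub_polar_facet_fill u Gr.
    rewrite (subset_trans LG Gt) subUset LG polar_facet_fill_diff Gt !andbT /=.
    apply: contraNneq xP => tx; rewrite (polar_facet_sub_eq (_ : PF x \subset PF r)) //.
    by rewrite -X_x (subset_trans _ Gr) // -tx subUset LG polar_facet_fill_diff.
  case/andP => /andP[Lt tx] /andP[XG Gt].
  rewrite (subset_trans (subsetUl _ _) XG) (fill_code_eq (subset_trans (subsetUr _ _) XG) Gt).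
  by rewrite eqxx !andbT /polar; apply/downP; exists (PF t); rewrite ?imset_f ?near_x.
rewrite (partition_big (fill_code u) xpredT) //=; apply: big1 => t _.
rewrite (eq_bigl _ _ (fibre t)); have [/andP[Lt tx] | _] := boolP ((L \subset PF t) && (t != x)).
  rewrite sum_sign_interval; case: eqP => // XPF; case/negP: tx; apply/eqP.
  apply: (@polar_facetI_inj u); apply/eqP; rewrite eqEsubset -/L; apply/andP; split.
    by apply/subsetP => w; rewrite in_setI -XPF !inE => /andP[wu /orP[// | /andP[/negP]]].
  by rewrite subsetI Lt /L subsetIl.
by rewrite big_pred0.
Qed.

(* A code x outside P at minimal Hamming distance #|PF u :\: PF x| from u
   fulfils the hypothesis of sum_sign_polar_link. *)
Lemma polar_full_of_sum_sign_neq0 P u :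
  (forall x, \sum_(G : {set V} | (G \in polar P) && (PF u :&: PF x \subset G))
               (-1) ^+ #|G| != 0 :> int) ->
  P = setT.
Proof.
move=> sum_neq0; apply/setP => y; rewrite inE; apply/negPn/negP => yP.
pose outside t := t \notin P.
have [x xP min_x] := arg_minnP (fun t => #|PF u :\: PF t|) (yP : outside y).
case/eqP: (sum_neq0 x); apply: sum_sign_polar_link xP _ => t tx Lt.
apply/negPn/negP => tP; have := min_x t tP; apply/negP; rewrite -ltnNge.
have meet w : PF u :&: PF w = PF u :\: (PF u :\: PF w) by rewrite setDDr setDv set0U.
apply: proper_card; rewrite properEneq; apply/andP; split.
  by apply: contra_neq tx => eq_diff; apply: (@polar_facetI_inj u); rewrite /= !meet eq_diff.
apply/subsetP => w; rewrite !in_setD => /andP[wt wu]; rewrite wu andbT.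
by apply: contra wt => wx; apply: (subsetP Lt); rewrite in_setI wu.
Qed.

End Sums.

Lemma down_polar_facets (S : seq {set V}) : (forall F, F \in S -> exists t, F = PF t) ->
  down [set F in S] = polar [set t | PF t \in S].
Proof.
move=> S_polar; congr down; apply/setP => F; rewrite inE.
apply/idP/imsetP => [/[dup] /S_polar[t ->] tS | [t + ->]]; last by rewrite inE.
by exists t; rewrite ?inE.
Qed.

End Polar.

Theorem lemma7p5 (n : nat) (C : {set {set 'I_n}}) :
  shellable (polar C) ->
  C = [set: {set 'I_n}] \/ collapsible (polar C).
Proof.
case=> d [C_pure [s [s_uniq mem_s s_shelling]]].
have s_polar F : F \in s -> exists t, F = polar_facet t.
  by rewrite mem_s facet_polar => /imsetP[t _ ->]; exists t.
have prefixE k : shell_prefix s k = polar [set t | polar_facet t \in take k s].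
  by apply: down_polar_facets => F /mem_take /s_polar.
have codesE : [set t | polar_facet t \in s] = C.
  by apply/setP => t; rewrite inE mem_s facet_polar (mem_imset _ _ (@polar_facet_inj n)).
have [/existsP[k /eqP RF] | no_homology_facet] :=
  boolP [exists k : 'I_(size s), restriction s k == shell_facet s k].
  left; have [u Fu] := s_polar _ (shell_facet_in (ltn_ord k)).
  have full : [set t | polar_facet t \in take k.+1 s] = setT.
    apply: (polar_full_of_sum_sign_neq0 (u := u)) => x; rewrite -prefixE.
    apply: sum_sign_shell_prefix_neq0 C_pure s_uniq mem_s s_shelling _ _ _ RF _ => //.
    by rewrite Fu subsetIl.
  apply/eqP; rewrite eqEsubset subsetT -full -codesE.
  by apply/subsetP => t; rewrite !inE => /mem_take.
right; have := prefixE (size s); rewrite take_size codesE => <-.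
apply: collapsible_shell_prefix C_pure s_uniq mem_s s_shelling _ _ (leqnn _) => k ks.
by move: no_homology_facet; rewrite negb_exists => /forallP/(_ (Ordinal ks)).
Qed.
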